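(* Let $b>a>0$, $c>0$, $u_L<0$, $\bar\Delta_H,\bar\Delta_L>0$, $L_0>0$, and $L_t=L_0e^{(b-a)t}$. The integro-differential equation $$\rho'(t)=\frac{b(-u_L)-c-L_tc+b\bar\Delta_L\int_0^te^{-bs}\rho'(s)\,ds-L_t\bar\Delta_Hae^{-at}(1-\rho(t))}{L_t\bar\Delta_He^{-at}+\bar\Delta_Le^{-bt}}$$ with initial condition $\rho(0)=0$ has a unique (continuously differentiable) solution defined for all $t\in[0,\infty)$.
   Context: Here $L_0=\frac{p_0}{1-p_0}$ is the prior likelihood ratio of state $H$; the equation expresses that a player is indifferent between taking $R$ now and continuing to acquire information when the opponent stops with $R$ according to $\rho$. *)

From Stdlib Require Import Reals.
From Coquelicot Require Import Coquelicot.
Open Scope R_scope.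

Definition Lt (a b L0 t : R) : R := L0 * exp ((b - a) * t).

Definition rhs (a b c uL DH DL L0 : R) (rho drho : R -> R) (t : R) : R :=
  (b * (- uL) - c - Lt a b L0 t * c
   + b * DL * RInt (fun s => exp (- b * s) * drho s) 0 t
   - Lt a b L0 t * DH * a * exp (- a * t) * (1 - rho t))
  / (Lt a b L0 t * DH * exp (- a * t) + DL * exp (- b * t)).

Definition C1_halfline (rho drho : R -> R) : Prop :=
  (forall t, 0 < t -> is_derive rho t (drho t)) /\
  filterlim (fun h => (rho h - rho 0) / h) (at_right 0) (locally (drho 0)) /\
  (forall t, 0 < t -> continuous drho t) /\
  filterlim drho (at_right 0) (locally (drho 0)).

Definition is_solution (a b c uL DH DL L0 : R) (rho drho : R -> R) : Prop :=
  C1_halfline rho drho /\ rho 0 = 0 /\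
  (forall t, 0 <= t -> drho t = rhs a b c uL DH DL L0 rho drho t).

(* Writing J(t) for the integral term, the equation reads rho' = c_rho rho + c_J J + f, where the
   coefficients share the positive denominator L_t DH e^{-at} + DL e^{-bt}, and J' = e^{-bt} rho'.
   So (rho, J) solves a linear 2x2 system with coefficients continuous on R and zero initial data.
   Its Picard iterates have increments bounded by (2B|t|)^{n+1}/(n+1)!, hence converge locally
   uniformly together with their derivatives, giving a global C^1 solution.  Conversely, the
   difference of two solutions solves the homogeneous system; the energy e^{-4At}(z^2 + J^2) is
   then nonincreasing and tends to 0 at 0+, so the difference vanishes. *)

From Stdlib Require Import Reals Lra Lia Psatz.
From Coquelicot Require Import Coquelicot.
Open Scope R_scope.

Lemma continuous_Rplus (f g : R -> R) (t : R) :
  continuous f t -> continuous g t -> continuous (fun s => f s + g s) t.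
Proof. exact (continuous_plus (V := R_NormedModule) f g t). Qed.

Lemma continuous_Rmult (f g : R -> R) (t : R) :
  continuous f t -> continuous g t -> continuous (fun s => f s * g s) t.
Proof. exact (continuous_mult (K := R_AbsRing) f g t). Qed.

Lemma is_derive_RInt_0 (f : R -> R) (t : R) :
  (forall s, continuous f s) -> is_derive (fun u => RInt f 0 u) t (f t).
Proof.
  intros Hf. apply is_derive_RInt with (a := 0); [|apply Hf].
  apply filter_forall; intros u. apply RInt_correct, ex_RInt_continuous; auto.
Qed.

Lemma continuous_RInt_0 (f : R -> R) (t : R) :
  (forall s, continuous f s) -> continuous (fun u => RInt f 0 u) t.
Proof.
  intros Hf. apply (ex_derive_continuous (K := R_AbsRing) (V := R_NormedModule)).
  eexists. apply is_derive_RInt_0, Hf.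
Qed.

Lemma abs_RInt_le_pow_nonneg (F : R -> R) (K : R) (m : nat) (t : R) :
  0 <= t -> (forall s, continuous F s) ->
  (forall s, 0 <= s <= t -> Rabs (F s) <= K * s ^ m) ->
  Rabs (RInt F 0 t) <= K * t ^ S m / INR (S m).
Proof.
  intros Ht HF HFb.
  assert (Hpow : is_RInt (fun s => K * s ^ m) 0 t (K * t ^ S m / INR (S m))).
  { replace (K * t ^ S m / INR (S m))
      with (scal K (t ^ S m / INR (S m) - 0 ^ S m / INR (S m))).
    - apply (is_RInt_scal (fun s => s ^ m)), is_RInt_pow.
    - assert (HS : INR (S m) <> 0) by (apply not_0_INR; lia).
      rewrite pow_i by lia. unfold scal; simpl; unfold mult; simpl. unfold Rdiv. ring. }
  eapply Rle_trans.
  { apply abs_RInt_le; [exact Ht|].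
    apply (ex_RInt_continuous (V := R_CompleteNormedModule)); auto. }
  rewrite <- (is_RInt_unique _ _ _ _ Hpow).
  apply RInt_le; [exact Ht | | eexists; exact Hpow | intros s Hs; apply HFb; lra].
  apply (ex_RInt_continuous (V := R_CompleteNormedModule)); intros s _.
  apply continuous_Rabs_comp, HF.
Qed.

Lemma abs_RInt_le_pow (F : R -> R) (K : R) (m : nat) (t : R) :
  (forall s, continuous F s) ->
  (forall s, Rabs s <= Rabs t -> Rabs (F s) <= K * Rabs s ^ m) ->
  Rabs (RInt F 0 t) <= K * Rabs t ^ S m / INR (S m).
Proof.
  intros HF HFb. destruct (Rle_or_lt 0 t) as [Ht | Ht].
  - rewrite (Rabs_pos_eq t) by exact Ht. apply abs_RInt_le_pow_nonneg; auto.
    intros s Hs. replace (s ^ m) with (Rabs s ^ m) by (rewrite Rabs_pos_eq; lra).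
    apply HFb. rewrite !Rabs_pos_eq; lra.
  - assert (HFopp : forall s, continuous (fun u => F (- u)) s).
    { intros s. apply (continuous_comp (fun u => - u) F); [|apply HF].
      apply (continuous_opp (V := R_NormedModule) (fun u => u)), continuous_id. }
    assert (Hsym : RInt F 0 t = - RInt (fun s => F (- s)) 0 (- t)).
    { assert (H := is_RInt_comp_opp F 0 (- t) _ (RInt_correct F (- 0) (- - t)
                  (ex_RInt_continuous _ _ _ (fun s _ => HF s)))).
      rewrite Ropp_0, Ropp_involutive in H.
      rewrite <- (is_RInt_unique _ _ _ _ H).
      rewrite (RInt_opp (V := R_CompleteNormedModule)); [|apply ex_RInt_continuous; auto].
      unfold opp; simpl. ring. }
    rewrite Hsym, Rabs_Ropp, (Rabs_left t) by exact Ht.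
    apply abs_RInt_le_pow_nonneg; [lra | exact HFopp |].
    intros s Hs. replace (s ^ m) with (Rabs (- s) ^ m) by (rewrite Rabs_Ropp, Rabs_pos_eq; lra).
    apply HFb. rewrite Rabs_Ropp, (Rabs_left t), Rabs_pos_eq; lra.
Qed.

Lemma ex_series_Rabs_le (a b : nat -> R) :
  (forall n, Rabs (a n) <= b n) -> ex_series b -> ex_series a.
Proof. exact (ex_series_le (K := R_AbsRing) (V := R_CompleteNormedModule) a b). Qed.

Lemma ex_series_exp_tail (q : R) :
  ex_series (fun n => q ^ S n / INR (Factorial.fact (S n))).
Proof.
  apply (ex_series_incr_1 (K := R_AbsRing) (V := R_NormedModule)
           (fun n => q ^ n / INR (Factorial.fact n))).
  exists (exp q). eapply is_series_ext; [|apply (is_exp_Reals q)].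
  intros n. unfold scal; simpl; unfold mult; simpl. rewrite pow_n_pow. reflexivity.
Qed.

Lemma Series_sub_sum_f_R0 (a : nat -> R) (k : nat) :
  ex_series a -> Series a - sum_f_R0 a k = Series (fun j => a (S k + j)%nat).
Proof. intros Ha. rewrite (Series_incr_n a (S k)) by (auto; lia). simpl pred. ring. Qed.

Lemma CVU_telescoping (X : nat -> R -> R) (beta : nat -> R) (r : posreal) :
  (forall y, X O y = 0) -> ex_series beta ->
  (forall n y, Boule 0 r y -> Rabs (X (S n) y - X n y) <= beta n) ->
  CVU X (fun y => Series (fun n => X (S n) y - X n y)) 0 r.
Proof.
  intros HX0 Hbeta Hdom eps Heps.
  destruct (proj1 (is_series_Reals _ _) (Series_correct _ Hbeta) eps Heps) as [N HN].
  exists (S N). intros [|k] y Hk Hy; [lia|].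
  set (d := fun n => X (S n) y - X n y).
  assert (Hpartial : forall j, X (S j) y = sum_f_R0 d j).
  { induction j as [|j IH]; simpl; rewrite <- ?IH; unfold d; rewrite ?HX0; ring. }
  assert (Hd : ex_series d).
  { apply (ex_series_Rabs_le d beta); [intros n; apply Hdom, Hy | exact Hbeta]. }
  assert (Htail : ex_series (fun j => beta (S k + j)%nat)).
  { apply (ex_series_incr_n (K := R_AbsRing) (V := R_NormedModule) beta). exact Hbeta. }
  specialize (HN k ltac:(lia)). unfold R_dist in HN.
  rewrite Hpartial, Series_sub_sum_f_R0 by exact Hd.
  eapply Rle_lt_trans; [apply Series_Rabs|].
  { apply (ex_series_Rabs_le _ (fun j => beta (S k + j)%nat)); [|exact Htail].
    intros j. rewrite Rabs_Rabsolu. apply Hdom, Hy. }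
  eapply Rle_lt_trans.
  { apply Series_le; [intros j; split; [apply Rabs_pos | apply Hdom, Hy] | exact Htail]. }
  rewrite <- Series_sub_sum_f_R0 by exact Hbeta.
  rewrite Rabs_minus_sym in HN. eapply Rle_lt_trans; [apply Rle_abs | exact HN].
Qed.

Lemma CVU_succ (fn : nat -> R -> R) (f : R -> R) (c : R) (r : posreal) :
  CVU fn f c r -> CVU (fun n => fn (S n)) f c r.
Proof.
  intros H eps Heps. destruct (H eps Heps) as [N HN].
  exists N. intros n y Hn Hy. apply HN; [lia | exact Hy].
Qed.

Lemma continuous_exp_mul (k : R) (f : R -> R) (t : R) :
  continuous f t -> continuous (fun s => exp (k * s) * f s) t.
Proof.
  intros Hf. apply continuous_Rmult; [|exact Hf].
  apply (ex_derive_continuous (K := R_AbsRing) (V := R_NormedModule)). auto_derive. auto.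
Qed.

Lemma filterlim_at_right_of_continuous (f : R -> R) (x : R) :
  continuous f x -> filterlim f (at_right x) (locally (f x)).
Proof. intros H. eapply filterlim_filter_le_1; [apply filter_le_within | exact H]. Qed.

Lemma filterlim_Rminus {T : Type} {F : (T -> Prop) -> Prop} {FF : Filter F}
    (f g : T -> R) (l m : R) :
  filterlim f F (locally l) -> filterlim g F (locally m) ->
  filterlim (fun u => f u - g u) F (locally (l - m)).
Proof.
  intros Hf Hg.
  apply (filterlim_comp_2 (H := locally (opp m)) f (fun u => opp (g u))
           (@plus R_NormedModule) Hf).
  - eapply filterlim_comp; [exact Hg | exact (filterlim_opp (V := R_NormedModule) m)].
  - exact (filterlim_plus (V := R_NormedModule) l (opp m)).
Qed.

Lemma is_derive_quotient_at_right (f : R -> R) (l : R) :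
  is_derive f 0 l -> filterlim (fun h => (f h - f 0) / h) (at_right 0) (locally l).
Proof.
  intros H. apply is_derive_Reals in H. apply filterlim_locally. intros eps.
  destruct (H eps (cond_pos eps)) as [d Hd].
  exists d. intros h Hh Hpos. apply Rabs_def2 in Hh.
  unfold minus, plus, opp in Hh; simpl in Hh.
  specialize (Hd h ltac:(lra) ltac:(apply Rabs_def1; lra)). rewrite Rplus_0_l in Hd.
  exact Hd.
Qed.

Lemma at_right_continuous_of_quotient (f : R -> R) (l : R) :
  filterlim (fun h => (f h - f 0) / h) (at_right 0) (locally l) ->
  filterlim f (at_right 0) (locally (f 0)).
Proof.
  intros Hq.
  apply (filterlim_ext_loc (fun h => f 0 + h * ((f h - f 0) / h))).
  { exists (mkposreal 1 Rlt_0_1). intros h _ Hh. field. lra. }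
  replace (locally (f 0)) with (locally (f 0 + 0 * l)) by (f_equal; ring).
  eapply filterlim_comp_2; [apply filterlim_const | | apply (filterlim_plus (V := R_NormedModule))].
  eapply filterlim_comp_2; [| exact Hq | apply (filterlim_mult (K := R_AbsRing))].
  exact (filterlim_at_right_of_continuous (fun h => h) 0 (continuous_id 0)).
Qed.

Lemma continuous_Rmax_0 (d : R -> R) :
  (forall t, 0 < t -> continuous d t) -> filterlim d (at_right 0) (locally (d 0)) ->
  forall s, continuous (fun u => d (Rmax u 0)) s.
Proof.
  intros Hc Hr s.
  destruct (Rtotal_order s 0) as [Hs | [-> | Hs]].
  - apply continuous_ext_loc with (g := fun _ => d 0); [|apply continuous_const].
    assert (Hs' : 0 < - s) by lra.
    exists (mkposreal (- s) Hs'). intros u Hu. apply Rabs_def2 in Hu.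
    unfold minus, plus, opp in Hu; simpl in Hu. rewrite Rmax_right by lra. reflexivity.
  - apply filterlim_locally. intros eps.
    apply filterlim_locally with (eps := eps) in Hr. destruct Hr as [del Hd].
    exists del. intros u Hu. rewrite (Rmax_left 0 0) by lra.
    destruct (Rlt_or_le 0 u) as [Hu0 | Hu0].
    + rewrite Rmax_left by lra. apply Hd; auto.
    + rewrite Rmax_right by lra. apply ball_center.
  - apply continuous_ext_loc with (g := d); [|apply Hc, Hs].
    exists (mkposreal s Hs). intros u Hu. apply Rabs_def2 in Hu.
    unfold minus, plus, opp in Hu; simpl in Hu. rewrite Rmax_left by lra. reflexivity.
Qed.

Lemma RInt_mul_Rmax_0 (f g : R -> R) (u : R) :
  0 <= u -> RInt (fun s => f s * g s) 0 u = RInt (fun s => f s * g (Rmax s 0)) 0 u.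
Proof.
  intros Hu. apply RInt_ext. intros s Hs.
  rewrite Rmin_left, Rmax_right in Hs by lra. rewrite Rmax_left by lra. reflexivity.
Qed.

Lemma is_derive_RInt_exp_Rmax_0 (k : R) (d : R -> R) (u : R) :
  (forall t, 0 < t -> continuous d t) -> filterlim d (at_right 0) (locally (d 0)) ->
  is_derive (fun v => RInt (fun s => exp (k * s) * d (Rmax s 0)) 0 v) u
    (exp (k * u) * d (Rmax u 0)).
Proof.
  intros Hc Hr. apply (is_derive_RInt_0 (fun s => exp (k * s) * d (Rmax s 0))).
  intros s. apply continuous_exp_mul, continuous_Rmax_0; assumption.
Qed.

Lemma at_right_0_lt (e : posreal) : at_right 0 (fun u => 0 < u < e).
Proof.
  exists e. intros u Hu Hpos. split; [exact Hpos|].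
  apply Rabs_def2 in Hu. unfold minus, plus, opp in Hu; simpl in Hu. lra.
Qed.

Lemma filterlim_at_right_abs_lt (f : R -> R) (e : posreal) :
  filterlim f (at_right 0) (locally 0) -> at_right 0 (fun u => Rabs (f u) < e).
Proof.
  intros Hf. apply (filter_imp (fun u => ball 0 e (f u))); [|apply Hf, locally_ball].
  intros u Hu. apply Rabs_def2 in Hu. unfold minus, plus, opp in Hu; simpl in Hu.
  apply Rabs_def1; lra.
Qed.

Definition affine (p q g x y : R -> R) (s : R) : R := p s * x s + q s * y s + g s.

Lemma continuous_affine (p q g x y : R -> R) (t : R) :
  continuous p t -> continuous q t -> continuous g t -> continuous x t -> continuous y t ->
  continuous (affine p q g x y) t.
Proof.
  intros. unfold affine.
  apply continuous_Rplus; [apply continuous_Rplus|]; try apply continuous_Rmult; assumption.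
Qed.

Lemma abs_affine_sub_le (p q g x y x' y' : R -> R) (B s : R) :
  Rabs (p s) <= B -> Rabs (q s) <= B ->
  Rabs (affine p q g x y s - affine p q g x' y' s)
  <= B * (Rabs (x s - x' s) + Rabs (y s - y' s)).
Proof.
  intros Hp Hq. unfold affine.
  replace (p s * x s + q s * y s + g s - (p s * x' s + q s * y' s + g s))
    with (p s * (x s - x' s) + q s * (y s - y' s)) by ring.
  eapply Rle_trans; [apply Rabs_triang|]. rewrite !Rabs_mult, Rmult_plus_distr_l.
  apply Rplus_le_compat; apply Rmult_le_compat_r; auto using Rabs_pos.
Qed.

Lemma abs_RInt_affine_sub_le (p q g x y x' y' : R -> R) (B K : R) (m : nat) (t : R) :
  (forall s, continuous p s) -> (forall s, continuous q s) -> (forall s, continuous g s) ->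
  (forall s, continuous x s) -> (forall s, continuous y s) ->
  (forall s, continuous x' s) -> (forall s, continuous y' s) ->
  (forall s, Rabs s <= Rabs t -> Rabs (p s) <= B /\ Rabs (q s) <= B) ->
  (forall s, Rabs s <= Rabs t -> Rabs (x s - x' s) + Rabs (y s - y' s) <= K * Rabs s ^ m) ->
  Rabs (RInt (affine p q g x y) 0 t - RInt (affine p q g x' y') 0 t)
  <= B * K * Rabs t ^ S m / INR (S m).
Proof.
  intros Cp Cq Cg Cx Cy Cx' Cy' HB HK.
  assert (Ca : forall u v, (forall s, continuous u s) -> (forall s, continuous v s) ->
                 forall s, continuous (affine p q g u v) s)
    by (intros; apply continuous_affine; auto).
  replace (RInt (affine p q g x y) 0 t - RInt (affine p q g x' y') 0 t)
    with (RInt (fun s => affine p q g x y s - affine p q g x' y' s) 0 t).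
  2:{ apply (RInt_minus (V := R_CompleteNormedModule));
      apply (ex_RInt_continuous (V := R_CompleteNormedModule)); intros; apply Ca; auto. }
  apply abs_RInt_le_pow.
  - intros s. apply (continuous_minus (V := R_NormedModule)); apply Ca; auto.
  - intros s Hs. destruct (HB s Hs) as [Hp Hq].
    eapply Rle_trans; [apply (abs_affine_sub_le _ _ _ _ _ _ _ B s Hp Hq)|].
    rewrite Rmult_assoc. apply Rmult_le_compat_l; [|apply HK, Hs].
    eapply Rle_trans; [apply Rabs_pos | exact Hp].
Qed.

Lemma abs_RInt_affine_0_le (p q g : R -> R) (B t : R) :
  (forall s, continuous p s) -> (forall s, continuous q s) -> (forall s, continuous g s) ->
  (forall s, Rabs s <= Rabs t -> Rabs (g s) <= B) ->
  Rabs (RInt (affine p q g (fun _ => 0) (fun _ => 0)) 0 t) <= B * Rabs t.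
Proof.
  intros Cp Cq Cg Hg.
  replace (B * Rabs t) with (B * Rabs t ^ 1 / INR 1) by (simpl; field).
  apply abs_RInt_le_pow.
  - intros s. apply continuous_affine; auto using continuous_const.
  - intros s Hs. unfold affine. rewrite !Rmult_0_r, !Rplus_0_l, pow_O, Rmult_1_r. apply Hg, Hs.
Qed.

Lemma CVU_affine (p q g : R -> R) (X Y : nat -> R -> R) (x y : R -> R)
    (c : R) (r : posreal) (B : R) :
  (forall s, Boule c r s -> Rabs (p s) <= B /\ Rabs (q s) <= B) ->
  CVU X x c r -> CVU Y y c r ->
  CVU (fun n => affine p q g (X n) (Y n)) (affine p q g x y) c r.
Proof.
  intros HB HX HY eps Heps.
  set (e := eps / (2 * (Rabs B + 1))).
  assert (He : 0 < e) by (apply Rdiv_lt_0_compat; [|assert (0 <= Rabs B) by apply Rabs_pos]; lra).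
  destruct (HX e He) as [N1 HN1], (HY e He) as [N2 HN2].
  exists (Nat.max N1 N2). intros n s Hn Hs.
  destruct (HB s Hs) as [Hp Hq].
  assert (HB0 : 0 <= B) by (eapply Rle_trans; [apply Rabs_pos | exact Hp]).
  specialize (HN1 n s ltac:(lia) Hs). specialize (HN2 n s ltac:(lia) Hs).
  eapply Rle_lt_trans; [apply (abs_affine_sub_le p q g x y (X n) (Y n) B s Hp Hq)|].
  apply Rle_lt_trans with (B * (2 * e)); [apply Rmult_le_compat_l; lra|].
  unfold e. rewrite Rabs_pos_eq by exact HB0.
  apply Rlt_0_minus. field_simplify; [|lra]. apply Rdiv_lt_0_compat; lra.
Qed.

Lemma continuous_bounded_on (f : R -> R) (lo hi : R) :
  lo <= hi -> (forall s, continuous f s) ->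
  exists B, forall s, lo <= s <= hi -> Rabs (f s) <= B.
Proof.
  intros Hle Hf.
  destruct (continuity_ab_maj (fun s => Rabs (f s)) lo hi Hle) as [M [HM _]].
  - intros s _. apply continuity_pt_filterlim, continuous_Rabs_comp, Hf.
  - exists (Rabs (f M)). exact HM.
Qed.

Section Picard.

Variables a11 a12 a21 a22 g1 g2 : R -> R.
Hypotheses (Ca11 : forall t, continuous a11 t) (Ca12 : forall t, continuous a12 t)
  (Ca21 : forall t, continuous a21 t) (Ca22 : forall t, continuous a22 t)
  (Cg1 : forall t, continuous g1 t) (Cg2 : forall t, continuous g2 t).

Fixpoint picard (n : nat) : (R -> R) * (R -> R) :=
  match n with
  | O => (fun _ => 0, fun _ => 0)
  | S n => (fun t => RInt (affine a11 a12 g1 (fst (picard n)) (snd (picard n))) 0 t,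
            fun t => RInt (affine a21 a22 g2 (fst (picard n)) (snd (picard n))) 0 t)
  end.

Local Notation X n := (fst (picard n)).
Local Notation Y n := (snd (picard n)).

Lemma picard_S (n : nat) (t : R) :
  X (S n) t = RInt (affine a11 a12 g1 (X n) (Y n)) 0 t /\
  Y (S n) t = RInt (affine a21 a22 g2 (X n) (Y n)) 0 t.
Proof. split; reflexivity. Qed.

Lemma picard_continuous (n : nat) (t : R) : continuous (X n) t /\ continuous (Y n) t.
Proof.
  revert t; induction n as [|n IH]; intros t; simpl.
  - split; apply continuous_const.
  - split; apply continuous_RInt_0; intros s; destruct (IH s); apply continuous_affine; auto.
Qed.

Lemma picard_at_0 (n : nat) : X n 0 = 0 /\ Y n 0 = 0.
Proof. destruct n; simpl; [|rewrite !RInt_point]; split; reflexivity. Qed.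

Lemma picard_increment_le (T B : R) :
  (forall s, Rabs s <= T ->
     Rabs (a11 s) <= B /\ Rabs (a12 s) <= B /\ Rabs (a21 s) <= B /\
     Rabs (a22 s) <= B /\ Rabs (g1 s) <= B /\ Rabs (g2 s) <= B) ->
  forall n t, Rabs t <= T ->
  Rabs (X (S n) t - X n t) + Rabs (Y (S n) t - Y n t)
  <= (2 * B) ^ S n * Rabs t ^ S n / INR (Factorial.fact (S n)).
Proof.
  intros HB n. induction n as [|n IH]; intros t Ht.
  - destruct (picard_S 0 t) as [-> ->]. simpl. rewrite !Rminus_0_r.
    assert (Hg : forall s, Rabs s <= Rabs t -> Rabs (g1 s) <= B /\ Rabs (g2 s) <= B)
      by (intros s Hs; destruct (HB s ltac:(lra)) as (_ & _ & _ & _ & ? & ?); auto).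
    pose proof (abs_RInt_affine_0_le a11 a12 g1 B t Ca11 Ca12 Cg1 (fun s Hs => proj1 (Hg s Hs))).
    pose proof (abs_RInt_affine_0_le a21 a22 g2 B t Ca21 Ca22 Cg2 (fun s Hs => proj2 (Hg s Hs))).
    lra.
  - destruct (picard_S (S n) t) as [-> ->]. destruct (picard_S n t) as [-> ->].
    set (K := (2 * B) ^ S n / INR (Factorial.fact (S n))).
    assert (HK : forall s, Rabs s <= Rabs t ->
               Rabs (X (S n) s - X n s) + Rabs (Y (S n) s - Y n s) <= K * Rabs s ^ S n).
    { intros s Hs.
      replace (K * Rabs s ^ S n) with ((2 * B) ^ S n * Rabs s ^ S n / INR (Factorial.fact (S n)))
        by (unfold K, Rdiv; ring).
      apply IH. lra. }
    assert (HCx : forall m s, continuous (X m) s)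
      by (intros; apply (proj1 (picard_continuous _ _))).
    assert (HCy : forall m s, continuous (Y m) s)
      by (intros; apply (proj2 (picard_continuous _ _))).
    assert (Hrow1 : forall s, Rabs s <= Rabs t -> Rabs (a11 s) <= B /\ Rabs (a12 s) <= B)
      by (intros s Hs; destruct (HB s ltac:(lra)) as (? & ? & _); auto).
    assert (Hrow2 : forall s, Rabs s <= Rabs t -> Rabs (a21 s) <= B /\ Rabs (a22 s) <= B)
      by (intros s Hs; destruct (HB s ltac:(lra)) as (_ & _ & ? & ? & _); auto).
    assert (H1 := abs_RInt_affine_sub_le a11 a12 g1 (X (S n)) (Y (S n)) (X n) (Y n) B K (S n) t
                    Ca11 Ca12 Cg1 (HCx _) (HCy _) (HCx _) (HCy _) Hrow1 HK).
    assert (H2 := abs_RInt_affine_sub_le a21 a22 g2 (X (S n)) (Y (S n)) (X n) (Y n) B K (S n) t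
                    Ca21 Ca22 Cg2 (HCx _) (HCy _) (HCx _) (HCy _) Hrow2 HK).
    eapply Rle_trans; [exact (Rplus_le_compat _ _ _ _ H1 H2)|].
    right. unfold K. rewrite (fact_simpl (S n)), mult_INR.
    assert (INR (S (S n)) <> 0) by (apply not_0_INR; lia).
    assert (INR (Factorial.fact (S n)) <> 0) by apply INR_fact_neq_0.
    simpl pow. field. auto.
Qed.

Definition picard_x (t : R) : R := Series (fun n => X (S n) t - X n t).
Definition picard_y (t : R) : R := Series (fun n => Y (S n) t - Y n t).

Lemma coefficients_bounded (T : R) :
  0 <= T -> exists B, 0 <= B /\ forall s, Rabs s <= T ->
    Rabs (a11 s) <= B /\ Rabs (a12 s) <= B /\ Rabs (a21 s) <= B /\
    Rabs (a22 s) <= B /\ Rabs (g1 s) <= B /\ Rabs (g2 s) <= B.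
Proof.
  intros HT.
  destruct (continuous_bounded_on
              (fun s => Rabs (a11 s) + Rabs (a12 s) + Rabs (a21 s) + Rabs (a22 s)
                        + Rabs (g1 s) + Rabs (g2 s)) (- T) T) as [B HB]; [lra| |].
  { intros s. repeat (apply continuous_Rplus; [|apply continuous_Rabs_comp; auto]).
    apply continuous_Rabs_comp; auto. }
  assert (Hcoef : forall s, Rabs s <= T ->
            Rabs (a11 s) <= B /\ Rabs (a12 s) <= B /\ Rabs (a21 s) <= B /\
            Rabs (a22 s) <= B /\ Rabs (g1 s) <= B /\ Rabs (g2 s) <= B).
  { intros s Hs. apply Rabs_le_between in Hs. specialize (HB s Hs).
    rewrite Rabs_pos_eq in HB by (repeat apply Rplus_le_le_0_compat; apply Rabs_pos).
    pose proof (Rabs_pos (a11 s)). pose proof (Rabs_pos (a12 s)).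
    pose proof (Rabs_pos (a21 s)). pose proof (Rabs_pos (a22 s)).
    pose proof (Rabs_pos (g1 s)). pose proof (Rabs_pos (g2 s)).
    repeat split; lra. }
  exists B. split; [|exact Hcoef].
  destruct (Hcoef 0) as [H _]; [rewrite Rabs_R0; exact HT|].
  eapply Rle_trans; [apply Rabs_pos | exact H].
Qed.

Lemma picard_CVU (T : posreal) (B : R) :
  0 <= B ->
  (forall s, Rabs s <= T ->
     Rabs (a11 s) <= B /\ Rabs (a12 s) <= B /\ Rabs (a21 s) <= B /\
     Rabs (a22 s) <= B /\ Rabs (g1 s) <= B /\ Rabs (g2 s) <= B) ->
  CVU (fun n => X n) picard_x 0 T /\ CVU (fun n => Y n) picard_y 0 T.
Proof.
  intros HB0 HB.
  set (beta := fun n => (2 * B * T) ^ S n / INR (Factorial.fact (S n))).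
  assert (Hinc : forall n s, Boule 0 T s ->
            Rabs (X (S n) s - X n s) + Rabs (Y (S n) s - Y n s) <= beta n).
  { intros n s Hs. unfold Boule in Hs. rewrite Rminus_0_r in Hs.
    eapply Rle_trans; [apply (picard_increment_le T B HB); lra|].
    unfold beta. rewrite (Rpow_mult_distr (2 * B) T). unfold Rdiv.
    apply Rmult_le_compat_r; [left; apply Rinv_0_lt_compat, INR_fact_lt_0|].
    apply Rmult_le_compat_l; [apply pow_le; lra|].
    apply pow_incr. split; [apply Rabs_pos | lra]. }
  split; apply CVU_telescoping with beta; try reflexivity; try apply ex_series_exp_tail;
    intros n s Hs; pose proof (Hinc n s Hs);
    pose proof (Rabs_pos (X (S n) s - X n s)); pose proof (Rabs_pos (Y (S n) s - Y n s)); lra.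
Qed.

Theorem linear_system_solution :
  exists x y : R -> R, x 0 = 0 /\ y 0 = 0 /\
    forall t, is_derive x t (affine a11 a12 g1 x y t) /\ is_derive y t (affine a21 a22 g2 x y t).
Proof.
  exists picard_x, picard_y. split; [|split].
  - unfold picard_x. rewrite (Series_ext _ (fun n => 0 * 0)), Series_scal_l; [ring|].
    intros n. rewrite (proj1 (picard_at_0 (S n))), (proj1 (picard_at_0 n)). ring.
  - unfold picard_y. rewrite (Series_ext _ (fun n => 0 * 0)), Series_scal_l; [ring|].
    intros n. rewrite (proj2 (picard_at_0 (S n))), (proj2 (picard_at_0 n)). ring.
  - intros t.
    assert (HT : 0 < Rabs t + 1) by (pose proof (Rabs_pos t); lra).
    set (T := mkposreal _ HT).
    destruct (coefficients_bounded T) as (B & HB0 & HB); [simpl; lra|].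
    destruct (picard_CVU T B HB0 HB) as [CX CY].
    assert (Hrows : forall s, Boule 0 T s ->
              (Rabs (a11 s) <= B /\ Rabs (a12 s) <= B) /\ (Rabs (a21 s) <= B /\ Rabs (a22 s) <= B)).
    { intros s Hs. unfold Boule in Hs. rewrite Rminus_0_r in Hs.
      destruct (HB s ltac:(lra)) as (? & ? & ? & ? & _). auto. }
    assert (Ht : Boule 0 T t) by (unfold Boule; simpl; rewrite Rminus_0_r; lra).
    assert (HC : forall n u, continuous (X n) u /\ continuous (Y n) u) by apply picard_continuous.
    split; apply is_derive_Reals.
    + apply (CVU_derivable (fun n => X (S n)) (fun n => affine a11 a12 g1 (X n) (Y n))
               picard_x (affine a11 a12 g1 picard_x picard_y) 0 T); [| | | exact Ht].
      * apply (CVU_affine _ _ _ _ _ _ _ _ _ B); auto. intros s Hs; apply Hrows, Hs.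
      * intros s Hs. apply (CVU_cv _ _ _ _ (CVU_succ _ _ _ _ CX) s Hs).
      * intros n s _. apply is_derive_Reals, is_derive_RInt_0.
        intros u. destruct (HC n u). apply continuous_affine; auto.
    + apply (CVU_derivable (fun n => Y (S n)) (fun n => affine a21 a22 g2 (X n) (Y n))
               picard_y (affine a21 a22 g2 picard_x picard_y) 0 T); [| | | exact Ht].
      * apply (CVU_affine _ _ _ _ _ _ _ _ _ B); auto. intros s Hs; apply Hrows, Hs.
      * intros s Hs. apply (CVU_cv _ _ _ _ (CVU_succ _ _ _ _ CY) s Hs).
      * intros n s _. apply is_derive_Reals, is_derive_RInt_0.
        intros u. destruct (HC n u). apply continuous_affine; auto.
Qed.

End Picard.

Lemma energy_derivative_le (a11 a12 a21 a22 x y A : R) :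
  Rabs a11 <= A -> Rabs a12 <= A -> Rabs a21 <= A -> Rabs a22 <= A ->
  2 * x * (a11 * x + a12 * y) + 2 * y * (a21 * x + a22 * y) <= 4 * A * (x ^ 2 + y ^ 2).
Proof.
  intros H11 H12 H21 H22.
  apply Rabs_le_between in H11, H12, H21, H22.
  assert (0 <= (A - a11) * x ^ 2) by (apply Rmult_le_pos; [lra | apply pow2_ge_0]).
  assert (0 <= (A - a22) * y ^ 2) by (apply Rmult_le_pos; [lra | apply pow2_ge_0]).
  (* [2 a xy <= A (x^2 + y^2)] for [|a| <= A]. *)
  assert (0 <= (A - a12) * (x + y) ^ 2) by (apply Rmult_le_pos; [lra | apply pow2_ge_0]).
  assert (0 <= (A + a12) * (x - y) ^ 2) by (apply Rmult_le_pos; [lra | apply pow2_ge_0]).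
  assert (0 <= (A - a21) * (x + y) ^ 2) by (apply Rmult_le_pos; [lra | apply pow2_ge_0]).
  assert (0 <= (A + a21) * (x - y) ^ 2) by (apply Rmult_le_pos; [lra | apply pow2_ge_0]).
  nra.
Qed.

Lemma le_of_nonpos_derive (f df : R -> R) (lo hi : R) :
  lo <= hi -> (forall u, lo <= u <= hi -> is_derive f u (df u)) ->
  (forall u, lo <= u <= hi -> df u <= 0) -> f hi <= f lo.
Proof.
  intros Hle Hd Hneg.
  destruct (MVT_gen f lo hi df) as [c [Hc Heq]].
  - intros u Hu. rewrite Rmin_left, Rmax_right in Hu by lra. apply Hd; lra.
  - intros u Hu. rewrite Rmin_left, Rmax_right in Hu by lra.
    apply continuity_pt_filterlim, (ex_derive_continuous (K := R_AbsRing) (V := R_NormedModule)).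
    eexists; apply Hd, Hu.
  - rewrite Rmin_left, Rmax_right in Hc by lra.
    assert (df c * (hi - lo) <= 0) by (apply Rmult_le_0_r; [apply Hneg, Hc | lra]).
    lra.
Qed.

Definition energy (A : R) (x y : R -> R) (u : R) : R := exp (- (4 * A) * u) * (x u ^ 2 + y u ^ 2).

Lemma energy_nonincreasing (a11 a12 a21 a22 x y : R -> R) (A t : R) :
  (forall s, 0 < s <= t -> Rabs (a11 s) <= A /\ Rabs (a12 s) <= A /\
                          Rabs (a21 s) <= A /\ Rabs (a22 s) <= A) ->
  (forall s, 0 < s <= t -> is_derive x s (a11 s * x s + a12 s * y s) /\
                          is_derive y s (a21 s * x s + a22 s * y s)) ->
  forall u, 0 < u <= t -> energy A x y t <= energy A x y u.
Proof.
  intros HA Hd u Hu.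
  set (dE := fun u => exp (- (4 * A) * u) *
               (2 * x u * (a11 u * x u + a12 u * y u) + 2 * y u * (a21 u * x u + a22 u * y u)
                - 4 * A * (x u ^ 2 + y u ^ 2))).
  apply (le_of_nonpos_derive (energy A x y) dE); [lra| |].
  - intros v Hv. destruct (Hd v ltac:(lra)) as [Dx Dy]. unfold energy.
    auto_derive; [repeat split; eexists; eauto|].
    replace (Derive (fun s => x s) v) with (a11 v * x v + a12 v * y v)
      by (symmetry; apply is_derive_unique, Dx).
    replace (Derive (fun s => y s) v) with (a21 v * x v + a22 v * y v)
      by (symmetry; apply is_derive_unique, Dy).
    unfold dE. ring.
  - intros v Hv. destruct (HA v ltac:(lra)) as (H11 & H12 & H21 & H22).
    unfold dE. pose proof (exp_pos (- (4 * A) * v)).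
    pose proof (energy_derivative_le _ _ _ _ (x v) (y v) A H11 H12 H21 H22). nra.
Qed.

(* Gronwall-type argument: the energy is nonincreasing on (0, t] and tends to 0 at 0+. *)
Lemma linear_system_zero (a11 a12 a21 a22 x y : R -> R) (A t : R) :
  0 < t ->
  (forall s, 0 < s <= t -> Rabs (a11 s) <= A /\ Rabs (a12 s) <= A /\
                          Rabs (a21 s) <= A /\ Rabs (a22 s) <= A) ->
  (forall s, 0 < s <= t -> is_derive x s (a11 s * x s + a12 s * y s) /\
                          is_derive y s (a21 s * x s + a22 s * y s)) ->
  filterlim x (at_right 0) (locally 0) -> filterlim y (at_right 0) (locally 0) ->
  x t = 0.
Proof.
  intros Ht HA Hd Hx Hy.
  assert (HA0 : 0 <= A).
  { destruct (HA t ltac:(lra)) as [H _]. eapply Rle_trans; [apply Rabs_pos | exact H]. }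
  assert (HEt : energy A x y t <= 0).
  { apply Rnot_lt_le. intros HEpos.
    assert (Hm : 0 < Rmin 1 (energy A x y t / 4)) by (apply Rmin_pos; lra).
    set (m := mkposreal _ Hm).
    assert (Hev : at_right 0 (fun u => (0 < u < t) /\ Rabs (x u) < m /\ Rabs (y u) < m)).
    { apply filter_and; [exact (at_right_0_lt (mkposreal t Ht))|].
      apply filter_and; apply filterlim_at_right_abs_lt; assumption. }
    destruct (filter_ex _ Hev) as [u (Hu & Hxu & Hyu)].
    assert (Hm1 : m <= 1) by apply Rmin_l. assert (Hm2 : m <= energy A x y t / 4) by apply Rmin_r.
    assert (Hexp : exp (- (4 * A) * u) <= 1).
    { rewrite <- exp_0. destruct (Req_dec A 0) as [-> | HA'].
      - right. f_equal. ring.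
      - left. apply exp_increasing. nra. }
    assert (Hsq : x u ^ 2 + y u ^ 2 < energy A x y t / 2).
    { rewrite <- (pow2_abs (x u)), <- (pow2_abs (y u)).
      pose proof (Rabs_pos (x u)). pose proof (Rabs_pos (y u)). nra. }
    pose proof (energy_nonincreasing _ _ _ _ _ _ _ _ HA Hd u ltac:(lra)).
    pose proof (exp_pos (- (4 * A) * u)).
    assert (energy A x y u <= x u ^ 2 + y u ^ 2).
    { unfold energy. pose proof (pow2_ge_0 (x u)). pose proof (pow2_ge_0 (y u)). nra. }
    lra. }
  unfold energy in HEt. pose proof (exp_pos (- (4 * A) * t)).
  pose proof (pow2_ge_0 (x t)). pose proof (pow2_ge_0 (y t)).
  assert (Hx2 : x t * x t = 0) by nra.
  destruct (Rmult_integral _ _ Hx2); assumption.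
Qed.

Section Equation.

Variables a b c uL DH DL L0 : R.
Hypotheses (hDH : 0 < DH) (hDL : 0 < DL) (hL0 : 0 < L0).

Definition denom (t : R) : R := Lt a b L0 t * DH * exp (- a * t) + DL * exp (- b * t).
Definition coef_rho (t : R) : R := Lt a b L0 t * DH * a * exp (- a * t) / denom t.
Definition coef_int (t : R) : R := b * DL / denom t.
Definition forcing (t : R) : R :=
  (b * (- uL) - c - Lt a b L0 t * c - Lt a b L0 t * DH * a * exp (- a * t)) / denom t.

Lemma rhs_affine (rho drho : R -> R) (t : R) :
  rhs a b c uL DH DL L0 rho drho t =
  affine coef_rho coef_int forcing rho (fun u => RInt (fun s => exp (- b * s) * drho s) 0 u) t.
Proof. unfold rhs, affine, coef_rho, coef_int, forcing, denom, Rdiv. ring. Qed.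

Lemma denom_pos (t : R) : 0 < denom t.
Proof.
  unfold denom, Lt.
  pose proof (exp_pos ((b - a) * t)).
  pose proof (exp_pos (- a * t)). pose proof (exp_pos (- b * t)).
  apply Rplus_lt_0_compat; repeat apply Rmult_lt_0_compat; assumption.
Qed.

Lemma continuous_coef_rho (t : R) : continuous coef_rho t.
Proof.
  pose proof (denom_pos t). apply (ex_derive_continuous (K := R_AbsRing) (V := R_NormedModule)).
  unfold coef_rho, denom, Lt in *. auto_derive. lra.
Qed.

Lemma continuous_coef_int (t : R) : continuous coef_int t.
Proof.
  pose proof (denom_pos t). apply (ex_derive_continuous (K := R_AbsRing) (V := R_NormedModule)).
  unfold coef_int, denom, Lt in *. auto_derive. lra.
Qed.

Lemma continuous_forcing (t : R) : continuous forcing t.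
Proof.
  pose proof (denom_pos t). apply (ex_derive_continuous (K := R_AbsRing) (V := R_NormedModule)).
  unfold forcing, denom, Lt in *. auto_derive. lra.
Qed.

Lemma coefficients_bounded_on (t : R) :
  0 <= t -> exists A, forall s, 0 <= s <= t ->
    Rabs (coef_rho s) <= A /\ Rabs (coef_int s) <= A /\
    Rabs (exp (- b * s) * coef_rho s) <= A /\ Rabs (exp (- b * s) * coef_int s) <= A.
Proof.
  intros Ht.
  assert (Ce_rho : forall s, continuous (fun u => exp (- b * u) * coef_rho u) s)
    by (intros; apply continuous_exp_mul, continuous_coef_rho).
  assert (Ce_int : forall s, continuous (fun u => exp (- b * u) * coef_int u) s)
    by (intros; apply continuous_exp_mul, continuous_coef_int).
  destruct (continuous_bounded_on
              (fun s => Rabs (coef_rho s) + Rabs (coef_int s) + Rabs (exp (- b * s) * coef_rho s)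
                        + Rabs (exp (- b * s) * coef_int s)) 0 t) as [A HA]; [lra| |].
  { intros s. apply continuous_Rplus; [apply continuous_Rplus; [apply continuous_Rplus|]|];
      apply continuous_Rabs_comp;
      [apply continuous_coef_rho | apply continuous_coef_int | apply Ce_rho | apply Ce_int]. }
  exists A. intros s Hs. specialize (HA s Hs).
  rewrite Rabs_pos_eq in HA by (repeat apply Rplus_le_le_0_compat; apply Rabs_pos).
  pose proof (Rabs_pos (coef_rho s)). pose proof (Rabs_pos (coef_int s)).
  pose proof (Rabs_pos (exp (- b * s) * coef_rho s)).
  pose proof (Rabs_pos (exp (- b * s) * coef_int s)).
  repeat split; lra.
Qed.

Lemma solution_exists : exists rho drho, is_solution a b c uL DH DL L0 rho drho.
Proof.
  destruct (linear_system_solution coef_rho coef_int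
              (fun s => exp (- b * s) * coef_rho s) (fun s => exp (- b * s) * coef_int s)
              forcing (fun s => exp (- b * s) * forcing s)
              continuous_coef_rho continuous_coef_int
              (fun t => continuous_exp_mul _ _ t (continuous_coef_rho t))
              (fun t => continuous_exp_mul _ _ t (continuous_coef_int t))
              continuous_forcing (fun t => continuous_exp_mul _ _ t (continuous_forcing t)))
    as (x & y & Hx0 & Hy0 & Hd).
  set (drho := affine coef_rho coef_int forcing x y).
  assert (Cx : forall t, continuous x t).
  { intros t. apply (ex_derive_continuous (K := R_AbsRing) (V := R_NormedModule)).
    eexists; apply (proj1 (Hd t)). }
  assert (Cy : forall t, continuous y t).
  { intros t. apply (ex_derive_continuous (K := R_AbsRing) (V := R_NormedModule)).
    eexists; apply (proj2 (Hd t)). }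
  assert (Cdrho : forall t, continuous drho t).
  { intros t. apply continuous_affine;
      auto using continuous_coef_rho, continuous_coef_int, continuous_forcing. }
  assert (Dy : forall t, is_derive y t (exp (- b * t) * drho t)).
  { intros t. destruct (Hd t) as [_ H]. unfold drho, affine in *.
    replace (exp (- b * t) * (coef_rho t * x t + coef_int t * y t + forcing t))
      with (exp (- b * t) * coef_rho t * x t + exp (- b * t) * coef_int t * y t
            + exp (- b * t) * forcing t) by ring.
    exact H. }
  assert (Hy : forall t, RInt (fun s => exp (- b * s) * drho s) 0 t = y t).
  { intros t. apply is_RInt_unique.
    replace (y t) with (minus (y t) (y 0)) by (rewrite Hy0; unfold minus, plus, opp; simpl; ring).
    apply (is_RInt_derive (V := R_CompleteNormedModule)); intros s _; [apply Dy|].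
    apply continuous_exp_mul, Cdrho. }
  exists x, drho. split; [|split; [exact Hx0|]].
  - split; [|split; [|split]].
    + intros t _. apply (proj1 (Hd t)).
    + apply is_derive_quotient_at_right, (proj1 (Hd 0)).
    + intros t _. apply Cdrho.
    + apply filterlim_at_right_of_continuous, Cdrho.
  - intros t _. rewrite rhs_affine. unfold drho, affine. rewrite Hy. reflexivity.
Qed.

Lemma solution_unique (rho1 drho1 rho2 drho2 : R -> R) :
  is_solution a b c uL DH DL L0 rho1 drho1 ->
  is_solution a b c uL DH DL L0 rho2 drho2 ->
  forall t, 0 <= t -> rho1 t = rho2 t.
Proof.
  intros [[D1 [Q1 [C1 R1]]] [Z1 E1]] [[D2 [Q2 [C2 R2]]] [Z2 E2]] t Ht.
  destruct (Rle_lt_or_eq_dec 0 t Ht) as [Htpos | <-]; [|rewrite Z1, Z2; reflexivity].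
  (* [drho_i] is only right-continuous at 0; freezing it at [drho_i 0] on the negative axis
     makes the integrands continuous on R, so the integral terms are differentiable. *)
  set (J1 := fun u => RInt (fun s => exp (- b * s) * drho1 (Rmax s 0)) 0 u).
  set (J2 := fun u => RInt (fun s => exp (- b * s) * drho2 (Rmax s 0)) 0 u).
  assert (DJ1 : forall u, is_derive J1 u (exp (- b * u) * drho1 (Rmax u 0)))
    by (intros; apply is_derive_RInt_exp_Rmax_0; assumption).
  assert (DJ2 : forall u, is_derive J2 u (exp (- b * u) * drho2 (Rmax u 0)))
    by (intros; apply is_derive_RInt_exp_Rmax_0; assumption).
  assert (Hdiff : forall s, 0 <= s ->
            drho1 s - drho2 s = coef_rho s * (rho1 s - rho2 s) + coef_int s * (J1 s - J2 s)).
  { intros s Hs. rewrite (E1 s Hs), (E2 s Hs), !rhs_affine. unfold affine.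
    rewrite (RInt_mul_Rmax_0 _ drho1 s Hs), (RInt_mul_Rmax_0 _ drho2 s Hs). unfold J1, J2. ring. }
  destruct (coefficients_bounded_on t) as [A HA]; [lra|].
  apply Rminus_diag_uniq.
  apply (linear_system_zero coef_rho coef_int (fun s => exp (- b * s) * coef_rho s)
           (fun s => exp (- b * s) * coef_int s) (fun u => rho1 u - rho2 u) (fun u => J1 u - J2 u)
           A t Htpos).
  - intros s Hs. apply HA. lra.
  - intros s Hs. rewrite <- (Hdiff s) by lra. split.
    + apply (is_derive_minus (K := R_AbsRing) (V := R_NormedModule)); [apply D1 | apply D2]; lra.
    + replace (exp (- b * s) * coef_rho s * (rho1 s - rho2 s)
               + exp (- b * s) * coef_int s * (J1 s - J2 s))
        with (exp (- b * s) * drho1 (Rmax s 0) - exp (- b * s) * drho2 (Rmax s 0))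
        by (rewrite Rmax_left, <- Rmult_minus_distr_l, Hdiff by lra; ring).
      apply (is_derive_minus (K := R_AbsRing) (V := R_NormedModule)); auto.
  - assert (H := filterlim_Rminus _ _ _ _ (at_right_continuous_of_quotient _ _ Q1)
                   (at_right_continuous_of_quotient _ _ Q2)).
    rewrite Z1, Z2, Rminus_0_r in H. exact H.
  - assert (H : continuous (fun u => J1 u - J2 u) 0).
    { apply (ex_derive_continuous (K := R_AbsRing) (V := R_NormedModule)).
      eexists. apply (is_derive_minus (K := R_AbsRing) (V := R_NormedModule)); auto. }
    apply filterlim_at_right_of_continuous in H.
    replace (J1 0 - J2 0) with 0 in H
      by (unfold J1, J2; rewrite !RInt_point; symmetry; apply Rminus_0_r).
    exact H.
Qed.

End Equation.

Theorem lemma4 (a b c uL DH DL L0 : R)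
  (ha : 0 < a) (hab : a < b) (hc : 0 < c) (huL : uL < 0)
  (hDH : 0 < DH) (hDL : 0 < DL) (hL0 : 0 < L0) :
  (exists rho drho, is_solution a b c uL DH DL L0 rho drho) /\
  (forall rho1 drho1 rho2 drho2,
     is_solution a b c uL DH DL L0 rho1 drho1 ->
     is_solution a b c uL DH DL L0 rho2 drho2 ->
     forall t, 0 <= t -> rho1 t = rho2 t).
Proof.
  split.
  - exact (solution_exists a b c uL DH DL L0 hDH hDL hL0).
  - exact (solution_unique a b c uL DH DL L0 hDH hDL hL0).
Qed.
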